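(* Let $W \subseteq \mathbb{Z}$. Then $W$ is a minimal additive complement to itself if and only if $W + W = \mathbb{Z}$ and $W$ contains no 3-term arithmetic progression.
   Context: For $X, Y \subseteq \mathbb{Z}$, $X + Y = \{x + y : x \in X, y \in Y\}$. A set $C \subseteq \mathbb{Z}$ is an additive complement to $W \subseteq \mathbb{Z}$ if $C + W = \mathbb{Z}$; it is a minimal additive complement to $W$ if moreover no proper subset of $C$ is an additive complement to $W$. A 3-term arithmetic progression in $W$ is a triple $w - d, w, w + d$ of elements of $W$ with $d \neq 0$. *)

From Stdlib Require Import ZArith.
Open Scope Z_scope.

Definition sumset (X Y : Z -> Prop) (z : Z) : Prop :=
  exists x y, X x /\ Y y /\ z = x + y.

Definition subset (X Y : Z -> Prop) : Prop := forall z, X z -> Y z.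

Definition additive_complement (C W : Z -> Prop) : Prop :=
  forall z, sumset C W z.

Definition proper_subset (X Y : Z -> Prop) : Prop :=
  subset X Y /\ exists y, Y y /\ ~ X y.

Definition minimal_additive_complement (C W : Z -> Prop) : Prop :=
  additive_complement C W /\
  forall C', proper_subset C' C -> ~ additive_complement C' W.

Definition has_3AP (W : Z -> Prop) : Prop :=
  exists w d, d <> 0 /\ W (w - d) /\ W w /\ W (w + d).

(* Complements are closed under taking supersets, so C is a minimal complement
   to W exactly when deleting any single point of C destroys the covering.
   For C = W, deleting w from W keeps W + W = Z precisely when 2w is still a
   sum x + y with x, y in W and x <> w, i.e. when w is the middle term of a
   3-term progression x, w, y in W. *)
From Stdlib Require Import ZArith Lia.
Open Scope Z_scope.

Definition setD1 (X : Z -> Prop) (a : Z) : Z -> Prop := fun x => X x /\ x <> a.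

Lemma additive_complement_subset (C C' W : Z -> Prop) :
  subset C C' -> additive_complement C W -> additive_complement C' W.
Proof.
  intros HCC' HC z.
  destruct (HC z) as [c [w [Hc [Hw ->]]]].
  exists c, w; auto.
Qed.

Lemma proper_subset_setD1 (X : Z -> Prop) (a : Z) :
  X a -> proper_subset (setD1 X a) X.
Proof.
  intros Ha; split.
  - intros x [Hx _]; exact Hx.
  - exists a; split; [exact Ha|]. intros [_ Hneq]; apply Hneq; reflexivity.
Qed.

Lemma proper_subset_subset_setD1 (X Y : Z -> Prop) :
  proper_subset X Y -> exists a, Y a /\ subset X (setD1 Y a).
Proof.
  intros [HXY [a [Ha HnXa]]].
  exists a; split; [exact Ha|].
  intros x Hx; split; [now apply HXY|].
  intros ->; contradiction.
Qed.

Lemma minimal_additive_complementP (C W : Z -> Prop) :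
  minimal_additive_complement C W <->
  additive_complement C W /\
  (forall a, C a -> ~ additive_complement (setD1 C a) W).
Proof.
  split.
  - intros [HC Hmin]; split; [exact HC|].
    intros a Ha. apply Hmin, proper_subset_setD1, Ha.
  - intros [HC Hpt]; split; [exact HC|].
    intros C' HC'C HC'.
    destruct (proper_subset_subset_setD1 C' C HC'C) as [a [Ha Hsub]].
    exact (Hpt a Ha (additive_complement_subset C' (setD1 C a) W Hsub HC')).
Qed.

Lemma self_complement_setD1P (W : Z -> Prop) (w : Z) :
  W w ->
  additive_complement (setD1 W w) W <->
  additive_complement W W /\ (exists d, d <> 0 /\ W (w - d) /\ W (w + d)).
Proof.
  intros Hw; split.
  - intros Hrem; split.
    + apply (additive_complement_subset (setD1 W w)); [|exact Hrem].
      intros x [Hx _]; exact Hx.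
    + destruct (Hrem (2 * w)) as [x [y [[Hx Hxw] [Hy Hsum]]]].
      exists (w - x).
      replace (w - (w - x)) with x by lia.
      replace (w + (w - x)) with y by lia.
      repeat split; auto; lia.
  - intros [HWW [d [Hd [Hl Hr]]]] z.
    destruct (HWW z) as [x [y [Hx [Hy ->]]]].
    destruct (Z.eq_dec x w) as [->|Hxw].
    + destruct (Z.eq_dec y w) as [->|Hyw].
        exists (w - d), (w + d). repeat split; auto; lia.
      * exists y, w. repeat split; auto; lia.
    + exists x, y. repeat split; auto.
Qed.

Theorem theorem10 (W : Z -> Prop) :
  minimal_additive_complement W W <->
  ((forall z, sumset W W z) /\ ~ has_3AP W).
Proof.
  destruct (minimal_additive_complementP W W) as [Hmin_pt Hpt_min].
  split.
  - intros Hmin. destruct (Hmin_pt Hmin) as [HWW Hpt].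
    split; [exact HWW|].
    intros [w [d [Hd [Hl [Hw Hr]]]]].
    apply (Hpt w Hw), self_complement_setD1P; [exact Hw|].
    split; [exact HWW|]. exists d; auto.
  - intros [HWW Hno]. apply Hpt_min.
    split; [exact HWW|].
    intros w Hw Hrem.
    destruct (proj1 (self_complement_setD1P W w Hw) Hrem)
      as [_ [d [Hd [Hl Hr]]]].
    apply Hno. exists w, d; auto.
Qed.
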